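(* The 2-color Rado number of $L(m,3)$ equals $C(m,3)=\left\lceil \frac{m-1}{3}\left\lceil \frac{m-1}{3}\right\rceil\right\rceil$ for every integer $m\geq 7$. For $m=6,5,4,3$ the 2-color Rado number of $L(m,3)$ is $5,4,1,9$, respectively.
   Context: For integers $m\geq 3$, $a\geq 1$, $L(m,a)$ denotes the equation $x_1+x_2+\cdots+x_{m-1}=a x_m$. For a positive integer $n$, $[n]=\{1,\dots,n\}$. A solution of $L(m,a)$ in $[n]$ is an $m$-tuple $(x_1,\dots,x_m)\in[n]^m$ (entries not necessarily distinct) satisfying the equation; given a 2-coloring of $[n]$, it is monochromatic if all $x_i$ have the same color. The 2-color Rado number of $L(m,a)$ is the least positive integer $n$ such that every 2-coloring of $[n]$ admits a monochromatic solution of $L(m,a)$ in $[n]$. *)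

From mathcomp Require Import all_boot.
Set Implicit Arguments. Unset Strict Implicit. Unset Printing Implicit Defensive.

(* A solution of L(m,a): x_1+...+x_{m-1} = a x_m.  The tuple (x_1,...,x_m)
   is represented by xs : 'I_m.-1 -> nat (for x_1..x_{m-1}) and xm (for x_m). *)
Definition is_solution (m a : nat) (xs : 'I_m.-1 -> nat) (xm : nat) : Prop :=
  \sum_(i < m.-1) xs i = a * xm.

Definition in_range (n : nat) (m : nat) (xs : 'I_m.-1 -> nat) (xm : nat) : Prop :=
  (forall i, 1 <= xs i <= n) /\ 1 <= xm <= n.

(* a 2-coloring of [n] is any c : nat -> bool (only values on [n] matter) *)
Definition monochromatic (c : nat -> bool) (m : nat) (xs : 'I_m.-1 -> nat) (xm : nat) : Prop :=
  forall i, c (xs i) = c xm.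

Definition rado_property (m a n : nat) : Prop :=
  forall c : nat -> bool, exists (xs : 'I_m.-1 -> nat) (xm : nat),
    in_range n xs xm /\ is_solution a xs xm /\ monochromatic c xs xm.

Definition is_rado_number (m a r : nat) : Prop :=
  0 < r /\ rado_property m a r /\ (forall n, 0 < n -> rado_property m a n -> r <= n).

Definition ceil_div (p q : nat) : nat := (p + q.-1) %/ q.

(* C(m,3) = ceil( (m-1)/3 * ceil((m-1)/3) ) = ceil( (m-1)*ceil((m-1)/3) / 3 ) *)
Definition C3 (m : nat) : nat := ceil_div ((m - 1) * ceil_div (m - 1) 3) 3.

From mathcomp Require Import all_boot zify.
Set Implicit Arguments. Unset Strict Implicit. Unset Printing Implicit Defensive.

(* Write k = m - 1, q = ceil(k/3) and C = ceil(kq/3) = C(m,3).  A solution in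
   [n] monochromatic for c is the same thing as a z in [n] such that 3z is a
   sum of k numbers of [n] of the colour of z ("expressible" below), so the
   file starts with a small calculus of such sums: single terms, constant
   sums, concatenation, and every total between k*lo and k*hi when a whole
   interval [lo, hi] is available.
   - Lower bound (all k): colour x red iff x < q.  A red solution has
     3 x_m >= k > 3(q-1), a blue one has 3 x_m >= kq, so [C-1] is
     solution-free.
   - Upper bound (k >= 6): with 1 red, a case analysis on the colours of
     2, 3, 4 (and, if 2 is red, of q, q+1 and the least blue b) exhibits in
     every case some z <= C whose both possible colours lead to a
     monochromatic k-fold sum equal to 3z.
   - Small cases m = 3..6: a boolean decision procedure, proved sound and
     complete, is run on all colourings of [n] and on an explicit
     solution-free colouring of [r-1]. *)

Definition expressible (P : nat -> Prop) (n s : nat) : Prop :=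
  exists f : nat -> nat, (forall i, i < n -> P (f i)) /\ \sum_(i < n) f i = s.

Lemma expressible0 P : expressible P 0 0.
Proof. by exists (fun _ => 0); rewrite big_ord0. Qed.

Lemma expressible1 (P : nat -> Prop) v : P v -> expressible P 1 v.
Proof. by move=> Pv; exists (fun _ => v); rewrite big_ord1. Qed.

Lemma expressible_add P n1 n2 s1 s2 :
  expressible P n1 s1 -> expressible P n2 s2 -> expressible P (n1 + n2) (s1 + s2).
Proof.
move=> [f1 [P1 <-]] [f2 [P2 <-]].
exists (fun i => if i < n1 then f1 i else f2 (i - n1)); split.
  move=> i lt_i; case: ifP => [/P1 //|/negbT]; rewrite -leqNgt => le_n1i.
  by apply: P2; rewrite ltn_subLR.
rewrite big_split_ord /=; congr (_ + _); apply: eq_bigr => i _ /=.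
  by rewrite ltn_ord.
by rewrite ltnNge leq_addr /= addKn.
Qed.

Lemma expressible_cast P n s n' s' :
  expressible P n s -> n = n' -> s = s' -> expressible P n' s'.
Proof. by move=> h <- <-. Qed.

Lemma expressible_const (P : nat -> Prop) v n : P v -> expressible P n (n * v).
Proof.
move=> Pv; elim: n => [|n IH]; first exact: expressible0.
by rewrite mulSn -add1n; apply: expressible_add IH; apply: expressible1.
Qed.

(* With every number of [lo, hi] available, n terms reach every total
   between n*lo and n*hi (take one term greedily, recurse on the rest). *)
Lemma expressible_interval (P : nat -> Prop) lo hi n s :
  (forall x, lo <= x <= hi -> P x) -> n * lo <= s <= n * hi -> expressible P n s.
Proof.
move=> Plohi; elim: n s => [|n IH] s s_bounds.
  have -> : s = 0 by lia.
  exact: expressible0.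
have le_lohi : lo <= hi by rewrite -(leq_pmul2l (ltn0Sn n)); lia.
have le_nlohi : n * lo <= n * hi by rewrite leq_mul2l le_lohi orbT.
rewrite !mulSn in s_bounds.
pose x := minn hi (s - n * lo).
have x_bounds : lo <= x <= hi by rewrite /x; lia.
have rest_bounds : n * lo <= s - x <= n * hi by rewrite /x; lia.
apply: expressible_cast
  (expressible_add (expressible1 (Plohi x x_bounds)) (IH _ rest_bounds)) erefl _.
by rewrite /x; lia.
Qed.

Lemma expressible_mono (P Q : nat -> Prop) n s :
  (forall x, P x -> Q x) -> expressible P n s -> expressible Q n s.
Proof. by move=> PQ [f [Pf <-]]; exists f; split=> // i /Pf /PQ. Qed.

Definition colored (N : nat) (c : nat -> bool) (b : bool) (x : nat) : Prop :=
  1 <= x <= N /\ c x = b.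

(* Some z in [N] has a*z equal to a sum of k numbers of [N] of its colour:
   exactly a monochromatic solution of L(k+1, a) in [N]. *)
Definition mono_sum (a k N : nat) (c : nat -> bool) : Prop :=
  exists z, 1 <= z <= N /\ expressible (colored N c (c z)) k (a * z).

Lemma mono_sum_intro a k N c z b :
  1 <= z <= N -> c z = b -> expressible (colored N c b) k (a * z) -> mono_sum a k N c.
Proof. by move=> z_bounds <- z_sum; exists z. Qed.

Lemma mono_sum_solution a k N c : mono_sum a k N c ->
  exists (xs : 'I_k.+1.-1 -> nat) (xm : nat),
    in_range N xs xm /\ is_solution a xs xm /\ monochromatic c xs xm.
Proof.
move=> [z [z_bounds [f [f_col f_sum]]]].
exists (fun i : 'I_k => f i), z; split; [split|split] => // i;
  by case: (f_col i (ltn_ord i)).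
Qed.

Lemma rado_lower m a r c :
  (forall (xs : 'I_m.-1 -> nat) xm,
     in_range r.-1 xs xm -> is_solution a xs xm -> monochromatic c xs xm -> False) ->
  forall n, rado_property m a n -> r <= n.
Proof.
move=> no_solution n rado; rewrite leqNgt; apply/negP => lt_nr.
have [xs [xm [[xs_range xm_range] [sol mono]]]] := rado c.
apply: (no_solution xs xm) sol mono; split; last by lia.
by move=> i; have := xs_range i; lia.
Qed.

Lemma sum_ge k (f : 'I_k -> nat) lo : (forall i, lo <= f i) -> k * lo <= \sum_(i < k) f i.
Proof.
move=> f_ge; rewrite -[X in X * lo]card_ord -sum_nat_const.
by apply: leq_sum => i _.
Qed.

Lemma ceil_div3_bounds p : p <= 3 * ceil_div p 3 <= p + 2.
Proof. by rewrite /ceil_div; lia. Qed.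

Lemma threshold_coloring_no_solution k (xs : 'I_k.+1.-1 -> nat) xm :
  let q := ceil_div k 3 in
  in_range (ceil_div (k * q) 3).-1 xs xm -> is_solution 3 xs xm ->
  monochromatic (fun x => x < q) xs xm -> False.
Proof.
move=> q [xs_range xm_range] sol mono; rewrite /is_solution /= in sol.
have q_bounds := ceil_div3_bounds k; have C_bounds := ceil_div3_bounds (k * q).
case: (ltnP xm q) => [small | large].
- have : k * 1 <= 3 * xm by rewrite -sol; apply: sum_ge => i; have := xs_range i; lia.
  lia.
- have : k * q <= 3 * xm.
    rewrite -sol; apply: sum_ge => i; move: (mono i) => /=.
    by rewrite (leq_gtF large) => /negbT; rewrite -leqNgt.
  lia.
Qed.

Fixpoint sums (S : seq nat) (k : nat) : seq nat :=
  if k is k'.+1 then undup [seq x + y | x <- S, y <- sums S k'] else [:: 0].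

Lemma sums_sound S k s : s \in sums S k -> expressible (fun x => x \in S) k s.
Proof.
elim: k s => [|k IH] s /=; first by rewrite inE => /eqP ->; exact: expressible0.
rewrite mem_undup => /allpairsP [[x y] [/= x_in y_in ->]].
exact: expressible_add (expressible1 x_in) (IH _ y_in).
Qed.

Lemma sums_complete S k (g : 'I_k -> nat) :
  (forall i, g i \in S) -> \sum_(i < k) g i \in sums S k.
Proof.
elim: k g => [|k IH] g g_in; first by rewrite big_ord0 inE.
rewrite big_ord_recr /= mem_undup addnC; apply/allpairsP.
exists (g ord_max, \sum_(i < k) g (widen_ord (leqnSn k) i)); split=> //=.
by apply: IH.
Qed.

Definition mono_exists (a k n : nat) (c : nat -> bool) : bool :=
  has (fun z => a * z \in sums [seq x <- iota 1 n | c x == c z] k) (iota 1 n).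

Lemma mono_exists_sound a k n c : mono_exists a k n c -> mono_sum a k n c.
Proof.
case/hasP => z; rewrite mem_iota => z_range /sums_sound z_sum.
exists z; split; first by lia.
apply: expressible_mono z_sum => x.
by rewrite mem_filter mem_iota => /andP [/eqP cx x_range]; split=> //; lia.
Qed.

Lemma mono_exists_complete a k n c (xs : 'I_k.+1.-1 -> nat) xm :
  in_range n xs xm -> is_solution a xs xm -> monochromatic c xs xm -> mono_exists a k n c.
Proof.
move=> [xs_range xm_range] sol mono; apply/hasP; exists xm; first by rewrite mem_iota; lia.
rewrite -sol; apply: sums_complete => i.
by rewrite mem_filter mem_iota mono eqxx /=; have := xs_range i; lia.
Qed.

Lemma mono_exists_ext a k n c1 c2 :
  {in iota 1 n, c1 =1 c2} -> mono_exists a k n c1 = mono_exists a k n c2.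
Proof.
move=> c12; apply: eq_in_has => z z_in /=; rewrite (c12 z z_in).
by congr (_ \in sums _ _); apply: eq_in_filter => x x_in; rewrite (c12 x x_in).
Qed.

Fixpoint colorings (n : nat) : seq (seq bool) :=
  if n is n'.+1 then [seq b :: s | b <- [:: true; false], s <- colorings n'] else [:: [::]].

Lemma colorings_complete s : s \in colorings (size s).
Proof.
elim: s => [|b s IH] //; apply/allpairsP; exists (b, s).
by case: b.
Qed.

Lemma rado_by_enumeration a k n :
  all (fun bs => mono_exists a k n (nth false bs)) (colorings n.+1) ->
  rado_property k.+1 a n.
Proof.
move=> /allP all_mono c; apply/mono_sum_solution/mono_exists_sound.
pose bs := [seq c i | i <- iota 0 n.+1].
rewrite (@mono_exists_ext _ _ _ _ (nth false bs)).
  by apply: all_mono; have := colorings_complete bs; rewrite size_map size_iota.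
move=> x; rewrite mem_iota => x_range.
by rewrite (nth_map 0) ?nth_iota ?size_iota //; lia.
Qed.

Lemma rado_lower_by_decision a k r c :
  ~~ mono_exists a k r.-1 c -> forall n, rado_property k.+1 a n -> r <= n.
Proof.
move=> /negP no_mono; apply: (rado_lower (c := c)) => xs xm range sol mono.
exact: no_mono (mono_exists_complete range sol mono).
Qed.

Lemma rado_m6 : is_rado_number 6 3 5.
Proof.
split=> //; split; first by apply: rado_by_enumeration; vm_compute.
move=> n _; apply: (@rado_lower_by_decision _ _ _ (fun x => x \in [:: 2; 3])).
by vm_compute.
Qed.

Lemma rado_m5 : is_rado_number 5 3 4.
Proof.
split=> //; split; first by apply: rado_by_enumeration; vm_compute.
move=> n _; apply: (@rado_lower_by_decision _ _ _ (fun x => x \in [:: 2])).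
by vm_compute.
Qed.

Lemma rado_m4 : is_rado_number 4 3 1.
Proof. by split=> //; split=> //; apply: rado_by_enumeration; vm_compute. Qed.

Lemma rado_m3 : is_rado_number 3 3 9.
Proof.
split=> //; split; first by apply: rado_by_enumeration; vm_compute.
move=> n _; apply: (@rado_lower_by_decision _ _ _ (fun x => x \in [:: 1; 3; 4; 7])).
by vm_compute.
Qed.

Section UpperBound.

Variables (k : nat) (c : nat -> bool).
Hypothesis k_ge6 : 6 <= k.

Local Notation q := (ceil_div k 3).
Local Notation C := (ceil_div (k * q) 3).
Local Notation red := (colored C c (c 1)).
Local Notation blue := (colored C c (~~ c 1)).

Lemma q_bounds : k <= 3 * q <= k + 2.
Proof. exact: ceil_div3_bounds. Qed.

Lemma C_bounds : k * q <= 3 * C <= k * q + 2.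
Proof. exact: ceil_div3_bounds. Qed.

Lemma C_ge_k : 7 <= k -> k <= C.
Proof.
move=> k_ge7; have C_b := C_bounds; have q_b := q_bounds.
have kq_ge : 3 * k <= k * q by rewrite mulnC leq_mul2l; apply/orP; right; lia.
lia.
Qed.

Lemma C_ge_k2 : k - 2 <= C.
Proof.
case: (ltnP 6 k) => [k_ge7 | k_le6]; first by have := C_ge_k k_ge7; lia.
by have -> : k = 6 by lia.
Qed.

Lemma two_colors x : c x = c 1 \/ c x = ~~ c 1.
Proof. by case: (c x); case: (c 1); auto. Qed.

Lemma by_color_of z :
  1 <= z <= C ->
  (c z = c 1 -> expressible red k (3 * z)) ->
  (c z = ~~ c 1 -> expressible blue k (3 * z)) -> mono_sum 3 k C c.
Proof.
move=> z_range red_sum blue_sum.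
have [cz | cz] := two_colors z.
- exact: mono_sum_intro z_range cz (red_sum cz).
- exact: mono_sum_intro z_range cz (blue_sum cz).
Qed.

(* 3(k-2) = (k-2)*1 + 2*(k-2). *)
Lemma red_k_minus_2 : c (k - 2) = c 1 -> expressible red k (3 * (k - 2)).
Proof.
move=> ck2; have C_ge := C_ge_k2.
have red1 : red 1 by split=> //; lia.
have redk2 : red (k - 2) by split=> //; lia.
apply: expressible_cast
  (expressible_add (expressible_const (k - 2) red1) (expressible_const 2 redk2)) _ _; lia.
Qed.

(* 2, 3 blue: z = k-2, with 3(k-2) = 6*2 + (k-6)*3 if z is blue. *)
Lemma two_blue_three_blue : c 2 = ~~ c 1 -> c 3 = ~~ c 1 -> mono_sum 3 k C c.
Proof.
move=> c2 c3; have C_ge := C_ge_k2.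
apply: (@by_color_of (k - 2)); [lia | exact: red_k_minus_2 | move=> _].
have blue2 : blue 2 by split=> //; lia.
have blue3 : blue 3 by split=> //; lia.
apply: expressible_cast
  (expressible_add (expressible_const 6 blue2) (expressible_const (k - 6) blue3)) _ _; lia.
Qed.

(* 2 blue, 3, 4 red: for k >= 7, z = k-1 with 3(k-1) = 4 + (k-3)*3 + 2*1
   or (k-1)*2 + (k-1); for k = 6, 12 = 4*1 + 2*4. *)
Lemma two_blue_three_red_four_red :
  c 2 = ~~ c 1 -> c 3 = c 1 -> c 4 = c 1 -> mono_sum 3 k C c.
Proof.
move=> c2 c3 c4; have C_ge := C_ge_k2.
have red1 : red 1 by split=> //; lia.
have red3 : red 3 by split=> //; lia.
have red4 : red 4 by split=> //; lia.
have blue2 : blue 2 by split=> //; lia.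
case: (ltnP 6 k) => [k_ge7 | k_le6].
- have C_gek := C_ge_k k_ge7.
  apply: (@by_color_of (k - 1)); first by lia.
  + move=> _; apply: expressible_cast (expressible_add (expressible1 red4)
      (expressible_add (expressible_const (k - 3) red3) (expressible_const 2 red1))) _ _; lia.
  + move=> ck1; have bluek1 : blue (k - 1) by split=> //; lia.
    apply: expressible_cast
      (expressible_add (expressible_const (k - 1) blue2) (expressible1 bluek1)) _ _; lia.
- apply: (mono_sum_intro (z := 4) _ c4); first by lia.
  apply: expressible_cast
    (expressible_add (expressible_const 4 red1) (expressible_const 2 red4)) _ _; lia.
Qed.

(* 2, 4 blue, 3 red, k = 2h + (odd k): for odd k, z = 2h with
   6h = 2h + 3h + h or (h-1)*4 + (h+2)*2; for even k, z = 2h - 2 with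
   blue representation (h+3)*2 + (h-3)*4. *)
Lemma two_blue_three_red_four_blue :
  c 2 = ~~ c 1 -> c 3 = c 1 -> c 4 = ~~ c 1 -> mono_sum 3 k C c.
Proof.
move=> c2 c3 c4; have C_ge := C_ge_k2.
have red1 : red 1 by split=> //; lia.
have red3 : red 3 by split=> //; lia.
have blue2 : blue 2 by split=> //; lia.
have blue4 : blue 4 by split=> //; lia.
have := odd_double_half k; set h := k./2; rewrite -muln2.
case: (odd k) => /= k_split.
- have C_gek := C_ge_k ltac:(lia).
  apply: (@by_color_of (k - 1)); first by lia.
  + move=> ck1; have redk1 : red (k - 1) by split=> //; lia.
    apply: expressible_cast (expressible_add (expressible1 redk1)
      (expressible_add (expressible_const h red3) (expressible_const h red1))) _ _; lia.
  + move=> _; apply: expressible_cast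
      (expressible_add (expressible_const (h - 1) blue4) (expressible_const (h + 2) blue2)) _ _;
      lia.
- apply: (@by_color_of (k - 2)); [lia | exact: red_k_minus_2 | move=> _].
  apply: expressible_cast
    (expressible_add (expressible_const (h + 3) blue2) (expressible_const (h - 3) blue4)) _ _;
    lia.
Qed.

(* 1, 2 red, q, q+1 blue, b the least blue (3 <= b <= q) and
   L = ceil(((k-2)b + 2q)/3) <= C.  Red L: 3L = 2L + (a sum of k-2 numbers
   of [1, b-1]).  Blue L: 3L = (k-2)b + (two numbers of [q, q+1]). *)
Lemma two_red_least_blue b :
  3 <= b <= q -> (forall x, 1 <= x < b -> c x = c 1) ->
  blue b -> blue q -> blue q.+1 -> mono_sum 3 k C c.
Proof.
move=> /andP [b_ge3 b_le_q] below_b blue_b blue_q blue_q1.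
have q_b := q_bounds; have C_b := C_bounds.
have b_le_C : b <= C by case: blue_b => /andP [].
set L := ceil_div ((k - 2) * b + 2 * q) 3.
have L_bounds : (k - 2) * b + 2 * q <= 3 * L <= (k - 2) * b + 2 * q + 2.
  exact: ceil_div3_bounds.
have b_le_q_mul : (k - 2) * b <= (k - 2) * q by rewrite leq_mul2l b_le_q orbT.
have kq_split : (k - 2) * q + 2 * q = k * q by rewrite -mulnDl subnK //; lia.
have b_ge3_mul : (k - 2) * 3 <= (k - 2) * b by rewrite leq_mul2l b_ge3 orbT.
have b1_split : (k - 2) * (b - 1) + (k - 2) = (k - 2) * b.
  by rewrite -[X in _ + X]muln1 -mulnDr subnK //; lia.
have L_range : 1 <= L <= C by lia.
apply: (by_color_of L_range) => cL.
- have redL : red L by [].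
  have red_below x : 1 <= x <= b - 1 -> red x.
    by move=> x_range; split; [lia | apply: below_b; lia].
  have L_sum : expressible red (k - 2) L by apply: (expressible_interval red_below); lia.
  apply: expressible_cast (expressible_add (expressible_const 2 redL) L_sum) _ _; lia.
- have blue_near x : q <= x <= q.+1 -> blue x.
    by move=> x_range; have [-> | ->] : x = q \/ x = q.+1 by lia.
  have top_sum : expressible blue 2 (3 * L - (k - 2) * b).
    by apply: (expressible_interval blue_near); lia.
  apply: expressible_cast (expressible_add (expressible_const (k - 2) blue_b) top_sum) _ _;
    lia.
Qed.

(* 1, 2 red: every z with k <= 3z <= 2k is red-representable; this covers
   q and q+1, otherwise the least blue number is handled above. *)
Lemma two_red : c 2 = c 1 -> mono_sum 3 k C c.
Proof.
move=> c2; have q_b := q_bounds; have C_b := C_bounds.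
have kq_ge : 6 * q <= k * q by rewrite leq_mul2r k_ge6 orbT.
have q1_le_C : q.+1 <= C by lia.
have red_12 x : 1 <= x <= 2 -> red x.
  move=> x_range; split; first by lia.
  by have [-> | ->] : x = 1 \/ x = 2 by lia.
have red_small z : k <= 3 * z <= 2 * k -> expressible red k (3 * z).
  by move=> z_range; apply: (expressible_interval red_12); lia.
case: (two_colors q) => cq.
  by apply: (mono_sum_intro _ cq); [lia | apply: red_small; lia].
case: (two_colors q.+1) => cq1.
  by apply: (mono_sum_intro _ cq1); [lia | apply: red_small; lia].
pose is_blue x := (1 <= x <= C) && (c x != c 1).
have blue_q : is_blue q by rewrite /is_blue cq; apply/andP; split; [lia | case: (c 1)].
case: (ex_minnP (ex_intro _ q blue_q)) => b /andP [b_range cb] b_min.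
have b_ge3 : 3 <= b.
  rewrite ltnNge; apply/negP => b_le2.
  have b12 : b = 1 \/ b = 2 by lia.
  by case: b12 cb => ->; rewrite ?c2; case: (c 1).
apply: (@two_red_least_blue b).
- by rewrite b_ge3 b_min.
- move=> x x_range; case: (two_colors x) => // cx.
  have : b <= x by apply: b_min; rewrite /is_blue cx; apply/andP; split; [lia | case: (c 1)].
  lia.
- by split=> //; move: cb; case: (c b); case: (c 1).
- by split=> //; lia.
- by split=> //; lia.
Qed.

Lemma upper_bound : mono_sum 3 k C c.
Proof.
case: (two_colors 2) => c2; first exact: two_red.
case: (two_colors 3) => c3; last exact: two_blue_three_blue.
case: (two_colors 4) => c4.
- exact: two_blue_three_red_four_red.
- exact: two_blue_three_red_four_blue.
Qed.

End UpperBound.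

Lemma C3_succ k : C3 k.+1 = ceil_div (k * ceil_div k 3) 3.
Proof. by rewrite /C3 subn1. Qed.

Lemma rado_general k : 6 <= k -> is_rado_number k.+1 3 (C3 k.+1).
Proof.
move=> k_ge6; rewrite C3_succ; split; [|split].
- have q_b := q_bounds k.
  have kq_pos : 0 < k * ceil_div k 3 by rewrite muln_gt0; apply/andP; split; lia.
  by have := C_bounds k; lia.
- by move=> c; apply/mono_sum_solution/upper_bound.
- move=> n _; apply: (rado_lower (c := fun x => x < ceil_div k 3)).
  exact: threshold_coloring_no_solution.
Qed.

Theorem theorem2 :
  (forall m : nat, 7 <= m -> is_rado_number m 3 (C3 m)) /\
  is_rado_number 6 3 5 /\ is_rado_number 5 3 4 /\
  is_rado_number 4 3 1 /\ is_rado_number 3 3 9.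
Proof.
split; first by case=> // k k_ge6; apply: rado_general.
by split; [exact: rado_m6 | split; [exact: rado_m5 | split; [exact: rado_m4 | exact: rado_m3]]].
Qed.
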